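(* Given an approval-based SCV instance and a committee $W$, it can be checked in time polynomial in the size of the instance whether $W$ satisfies SW-JR.
   Context: An approval-based sub-committee voting (SCV) instance consists of a set of voters $N=\{1,\ldots,n\}$, a finite set of candidates $C$ partitioned into candidate subsets $C_1,\ldots,C_\ell$, positive integer quotas $k_j\le |C_j|$ with $k=\sum_{j=1}^\ell k_j$, and approval ballots $A_i\subseteq C$ for $i\in N$. A committee is a set $W\subseteq C$ with $|W\cap C_j|=k_j$ for every $j$. $W$ satisfies SW-JR if for every $X\subseteq N$ with $|X|\ge n/k$ and $|\bigcap_{i\in X}A_i|\ge 1$ we have $|W\cap \bigcup_{i\in X}A_i|\ge 1$. *)

From mathcomp Require Import all_boot all_algebra.
Set Implicit Arguments. Unset Strict Implicit. Unset Printing Implicit Defensive.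

(* Voters are 0..n_voters-1, candidates are 0..n_cands-1.                    *)
(* cand_group : candidate c belongs to subset C_j with j = nth 0 cand_group c *)
(* quotas     : k_0, ..., k_{l-1}  (l = size quotas)                          *)
(* ballots    : A_0, ..., A_{n-1}  (each a list of candidates)                *)
Record scv_instance := SCV {
  n_voters : nat;
  n_cands : nat;
  cand_group : seq nat;
  quotas : seq nat;
  ballots : seq (seq nat)
}.

Definition ballot (I : scv_instance) (i : nat) : seq nat := nth [::] (ballots I) i.
Definition n_groups (I : scv_instance) : nat := size (quotas I).
Definition quota (I : scv_instance) (j : nat) : nat := nth 0 (quotas I) j.
Definition in_group (I : scv_instance) (j c : nat) : bool :=
  (c < n_cands I) && (nth 0 (cand_group I) c == j).
Definition group_size (I : scv_instance) (j : nat) : nat :=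
  count (in_group I j) (iota 0 (n_cands I)).
Definition committee_size (I : scv_instance) : nat := sumn (quotas I).

Definition wf_instance (I : scv_instance) : Prop :=
  0 < n_voters I /\ 0 < n_groups I /\
  size (cand_group I) = n_cands I /\
  all (fun g => g < n_groups I) (cand_group I) /\
  size (ballots I) = n_voters I /\
  all (all (fun c => c < n_cands I)) (ballots I) /\
  all (fun j => (0 < quota I j) && (quota I j <= group_size I j))
          (iota 0 (n_groups I)).

Definition is_committee (I : scv_instance) (W : seq nat) : Prop :=
  [/\ uniq W, all (fun c => c < n_cands I) W
    & forall j, j < n_groups I -> count (in_group I j) W = quota I j].

Definition SW_JR (I : scv_instance) (W : seq nat) : Prop :=
  forall X : {set 'I_(n_voters I)},
    ((n_voters I)%:R / (committee_size I)%:R <= (#|X|)%:R :> rat)%R ->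
    (exists c, c < n_cands I /\ forall i : 'I_(n_voters I), i \in X -> c \in ballot I i) ->
    exists2 i : 'I_(n_voters I), i \in X & exists2 c, c \in W & c \in ballot I i.

(* Computational model: the weak call-by-value lambda calculus L             *)
(* (Forster, Kunze, Roth 2020: a reasonable model for time, counting         *)
(* beta-steps), with Scott encodings of data.                                *)
Inductive Lterm : Type :=
| Lvar (n : nat)
| Lapp (s t : Lterm)
| Llam (s : Lterm).

Fixpoint Lsubst (s : Lterm) (k : nat) (u : Lterm) : Lterm :=
  match s with
  | Lvar n => if n == k then u else Lvar n
  | Lapp s1 s2 => Lapp (Lsubst s1 k u) (Lsubst s2 k u)
  | Llam s1 => Llam (Lsubst s1 k.+1 u)
  end.

Inductive Lstep : Lterm -> Lterm -> Prop :=
| LstepBeta s t : Lstep (Lapp (Llam s) (Llam t)) (Lsubst s 0 (Llam t))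
| LstepAppL s s' t : Lstep s s' -> Lstep (Lapp s t) (Lapp s' t)
| LstepAppR s t t' : Lstep t t' -> Lstep (Lapp (Llam s) t) (Lapp (Llam s) t').

Fixpoint Lredn (k : nat) (s t : Lterm) : Prop :=
  match k with
  | 0 => s = t
  | k'.+1 => exists2 s', Lstep s s' & Lredn k' s' t
  end.

Fixpoint Lsize (s : Lterm) : nat :=
  match s with
  | Lvar n => n.+1
  | Lapp s1 s2 => (Lsize s1 + Lsize s2).+1
  | Llam s1 => (Lsize s1).+1
  end.

Fixpoint Lbound (k : nat) (s : Lterm) : bool :=
  match s with
  | Lvar n => n < k
  | Lapp s1 s2 => Lbound k s1 && Lbound k s2
  | Llam s1 => Lbound k.+1 s1
  end.
Definition Lclosed (s : Lterm) : bool := Lbound 0 s.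

Definition enc_bool (b : bool) : Lterm :=
  if b then Llam (Llam (Lvar 1)) else Llam (Llam (Lvar 0)).
Fixpoint enc_nat (n : nat) : Lterm :=
  match n with
  | 0 => Llam (Llam (Lvar 1))
  | n'.+1 => Llam (Llam (Lapp (Lvar 0) (enc_nat n')))
  end.
Fixpoint enc_list (A : Type) (f : A -> Lterm) (l : seq A) : Lterm :=
  match l with
  | [::] => Llam (Llam (Lvar 1))
  | a :: l' => Llam (Llam (Lapp (Lapp (Lvar 0) (f a)) (enc_list f l')))
  end.
Definition enc_pair (a b : Lterm) : Lterm := Llam (Lapp (Lapp (Lvar 0) a) b).

Definition enc_input (I : scv_instance) (W : seq nat) : Lterm :=
  enc_pair (enc_nat (n_voters I))
  (enc_pair (enc_nat (n_cands I))
  (enc_pair (enc_list enc_nat (cand_group I))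
  (enc_pair (enc_list enc_nat (quotas I))
  (enc_pair (enc_list (enc_list enc_nat) (ballots I))
            (enc_list enc_nat W))))).

From mathcomp Require Import all_boot all_order all_algebra.
From mathcomp Require Import zify.

(* SW-JR fails exactly when, for some candidate c, at least n/k voters approve
   c but no member of W: these voters form a violating group, and every
   violating group with common candidate c consists of such voters.  So it
   suffices to check, for every candidate c, that k times the number of such
   voters is below n; the L-program below does this by counting n down by the
   quotas once per such voter.  Its loops are nested five deep (candidates,
   ballots, ballot entries, members of W, unary equality test), and each runs
   at most |input| times, so it takes O(|input|^5) beta-steps. *)

Set Implicit Arguments.
Unset Strict Implicit.
Unset Printing Implicit Defensive.

Import Order.TTheory GRing.Theory Num.Theory.

(** * SW-JR as a counting condition *)

Lemma card_set_nth (T : Type) (x0 : T) (P : pred T) (s : seq T) n :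
  size s = n -> #|[set i : 'I_n | P (nth x0 s i)]| = count P s.
Proof.
move=> <-; rewrite cardsE cardE size_filter /enum_mem -enumT /=.
rewrite -(count_map val (fun i => P (nth x0 s i))) val_enum_ord.
by rewrite -count_map -/(mkseq _ _) mkseq_nth.
Qed.

Lemma ler_divn_nat (R : numFieldType) (n k x : nat) :
  0 < k -> (n%:R / k%:R <= x%:R :> R)%R = (n <= x * k).
Proof. by move=> k_gt0; rewrite ler_pdivrMr ?ltr0n // -natrM ler_nat. Qed.

Lemma committee_size_gt0 I : wf_instance I -> 0 < committee_size I.
Proof.
case=> _ [+ [_ [_ [_ [_]]]]]; rewrite /committee_size /n_groups /quota.
by case: (quotas I) => [|q qs] //= _ /andP[/andP[q_gt0 _] _]; rewrite ltn_addr.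
Qed.

Definition neglected (W : seq nat) (c : nat) : pred (seq nat) :=
  fun A => (c \in A) && ~~ has (mem W) A.

Lemma SW_JR_iff_neglected I W : wf_instance I ->
  SW_JR I W <-> forall c, c < n_cands I ->
    committee_size I * count (neglected W c) (ballots I) < n_voters I.
Proof.
move=> wfI; have k_gt0 := committee_size_gt0 wfI.
case: wfI => _ [_ [_ [_ [size_ballots _]]]].
pose X c := [set i : 'I_(n_voters I) | neglected W c (ballot I i)].
have card_X c : #|X c| = count (neglected W c) (ballots I).
  exact: card_set_nth.
split=> [swjr c c_lt | small X0 large [c [c_lt common]]].
  rewrite ltnNge mulnC -card_X -(ler_divn_nat rat) //; apply/negP => large.
  have common : forall i, i \in X c -> c \in ballot I i.
    by move=> i; rewrite inE => /andP[].
  have [i] := swjr (X c) large (ex_intro _ c (conj c_lt common)).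
  by rewrite inE => /andP[_ /hasP none] [d dW dA]; apply: none; exists d.
have [/existsP[i /andP[iX0 /hasP[d dA dW]]] | /existsPn none] :=
  boolP [exists i in X0, has (mem W) (ballot I i)].
  by exists i => //; exists d.
have sub_X : X0 \subset X c.
  by apply/subsetP => i iX0; rewrite inE /neglected common //=; move: (none i); rewrite iX0.
move: large; rewrite ler_divn_nat // => large.
have := small c c_lt; rewrite ltnNge mulnC => /negP[].
by apply: leq_trans large _; rewrite leq_mul2r -card_X subset_leq_card ?orbT.
Qed.

(* Follows the branching of the L-program [Lcount_down] below. *)
Definition count_step (c : nat) (W qs : seq nat) (r : nat) (A : seq nat) : nat :=
  if c \in A then (if has (mem W) A then r else foldl subn r qs) else r.

Definition count_down (c : nat) (W qs : seq nat) (r : nat) (B : seq (seq nat)) : nat :=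
  foldl (count_step c W qs) r B.

Fixpoint check_cands (n : nat) (W qs : seq nat) (B : seq (seq nat)) (nc : nat) : bool :=
  if nc is c.+1 then (0 < count_down c W qs n B) && check_cands n W qs B c else true.

Lemma foldl_subn r qs : foldl subn r qs = r - sumn qs.
Proof. by elim: qs r => [|q qs IH] r /=; rewrite ?subn0 // IH subnDA. Qed.

Lemma count_downE c W qs r B :
  count_down c W qs r B = r - sumn qs * count (neglected W c) B.
Proof.
elim: B r => [|A B IH] r /=; first by rewrite muln0 subn0.
rewrite IH /count_step /neglected foldl_subn.
by case: (c \in A); case: (has _ A); rewrite /= ?add0n ?mulnDr ?muln1 ?subnDA.
Qed.

Lemma check_candsP n W qs B nc :
  reflect (forall c, c < nc -> sumn qs * count (neglected W c) B < n)
          (check_cands n W qs B nc).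
Proof.
elim: nc => [|nc IH] /=; first by constructor.
rewrite count_downE subn_gt0; apply: (iffP andP) => [[small /IH all_small] c | small].
  by rewrite ltnS leq_eqVlt => /orP[/eqP-> // | /all_small].
by split; [exact: small | apply/IH => c c_lt; apply: small; exact: ltnW].
Qed.

Definition swjr_check I W := check_cands (n_voters I) W (quotas I) (ballots I) (n_cands I).

Lemma swjr_check_SW_JR I W : wf_instance I -> swjr_check I W <-> SW_JR I W.
Proof. by move=> wfI; rewrite SW_JR_iff_neglected //; split=> /check_candsP. Qed.

(** * Call-by-value reduction in L *)

Lemma Lredn_trans a b s u v : Lredn a s u -> Lredn b u v -> Lredn (a + b) s v.
Proof.
elim: a s => [|a IH] s /=; first by move=> ->.
by case=> s' step red red'; exists s' => //; apply: IH red red'.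
Qed.

Lemma Lredn_appL a s s' t : Lredn a s s' -> Lredn a (Lapp s t) (Lapp s' t).
Proof.
elim: a s => [|a IH] s /=; first by move=> ->.
by case=> s1 step red; exists (Lapp s1 t); [constructor | apply: IH].
Qed.

Lemma Lredn_appR a s t t' : Lredn a t t' -> Lredn a (Lapp (Llam s) t) (Lapp (Llam s) t').
Proof.
elim: a t => [|a IH] t /=; first by move=> ->.
by case=> t1 step red; exists (Lapp (Llam s) t1); [constructor | apply: IH].
Qed.

Lemma Lredn_eq k k' s w w' : Lredn k' s w' -> k' = k -> w' = w -> Lredn k s w.
Proof. by move=> red <- <-. Qed.

Definition Lvalue (t : Lterm) : bool := if t is Llam _ then Lclosed t else false.

Lemma Lbound_le s k j : Lbound k s -> k <= j -> Lbound j s.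
Proof.
elim: s k j => [n|s1 IH1 s2 IH2|s IH] k j /=.
- by move=> n_lt k_le; apply: leq_trans k_le.
- by case/andP=> b1 b2 k_le; rewrite (IH1 k j b1 k_le) (IH2 k j b2 k_le).
- by move=> b k_le; apply: (IH k.+1).
Qed.

Lemma Lsubst_Lbound s k j u : Lbound k s -> k <= j -> Lsubst s j u = s.
Proof.
elim: s k j => [n|s1 IH1 s2 IH2|s IH] k j /=.
- by move=> n_lt k_le; case: eqP => // n_j; rewrite n_j ltnNge k_le in n_lt.
- by case/andP=> b1 b2 k_le; rewrite (IH1 k j b1 k_le) (IH2 k j b2 k_le).
- by move=> b k_le; rewrite (IH k.+1 j.+1 b k_le).
Qed.

Lemma Lvalue_bound t k : Lvalue t -> Lbound k t.
Proof. by case: t => // s /Lbound_le; apply. Qed.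

Lemma Lsubst_value t j u : Lvalue t -> Lsubst t j u = t.
Proof. by case: t => // s closed; apply: (@Lsubst_Lbound _ 0). Qed.

Lemma Lredn_beta k s v w :
  Lvalue v -> Lredn k (Lsubst s 0 v) w -> Lredn k.+1 (Lapp (Llam s) v) w.
Proof. by case: v => // v _ red; exists (Lsubst s 0 (Llam v)) => //; constructor. Qed.

Lemma Lvalue_enc_nat n : Lvalue (enc_nat n).
Proof.
suff bound k : Lbound k (enc_nat n) by case: n bound => [|n] /(_ 0).
by elim: n k => [|n IH] k //=; rewrite IH.
Qed.

Lemma Lvalue_enc_bool b : Lvalue (enc_bool b).
Proof. by case: b. Qed.

Lemma Lvalue_enc_list T (f : T -> Lterm) l :
  (forall x, Lvalue (f x)) -> Lvalue (enc_list f l).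
Proof.
move=> f_val; suff bound k : Lbound k (enc_list f l) by case: l bound => [|x l] /(_ 0).
by elim: l k => [|x l IH] k //=; rewrite IH Lvalue_bound.
Qed.

Lemma Lvalue_enc_pair a b : Lvalue a -> Lvalue b -> Lvalue (enc_pair a b).
Proof. by move=> a_val b_val; rewrite /Lvalue /Lclosed /= !Lvalue_bound. Qed.

(* Call-by-value: both branches of a Scott-encoded conditional are evaluated. *)
Lemma Lredn_enc_bool kx ky (b : bool) s t x y :
  Lredn kx s x -> Lredn ky t y -> Lvalue x -> Lvalue y ->
  Lredn (kx + ky + 2) (Lapp (Lapp (enc_bool b) s) t) (if b then x else y).
Proof.
move=> red_x red_y x_val y_val.
have -> : kx + ky + 2 = (kx + 1) + (ky + 1) by rewrite addnACA.
have red_fun : Lredn (kx + 1) (Lapp (enc_bool b) s) (Llam (if b then x else Lvar 0)).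
  by case: b; apply: Lredn_trans (Lredn_appR _ red_x) (Lredn_beta x_val _).
apply: Lredn_trans (Lredn_appL _ red_fun) _.
apply: Lredn_trans (Lredn_appR _ red_y) (Lredn_beta y_val _).
by case: b {red_fun} => /=; rewrite ?Lsubst_value.
Qed.

Ltac solve_bound := lazymatch goal with
  | |- is_true (Lbound _ (Lvar _)) => reflexivity
  | |- is_true (Lbound ?k (Lapp ?s ?t)) =>
      change (is_true (Lbound k s && Lbound k t)); apply/andP; split; solve_bound
  | |- is_true (Lbound ?k (Llam ?s)) => change (is_true (Lbound k.+1 s)); solve_bound
  | |- _ => apply: Lvalue_bound; solve_value
  end
with solve_value := lazymatch goal with
  | |- is_true (Lvalue (Llam ?s)) => change (is_true (Lbound 1 s)); solve_bound
  | |- is_true (Lvalue (enc_nat _)) => apply: Lvalue_enc_nat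
  | |- is_true (Lvalue (enc_bool _)) => apply: Lvalue_enc_bool
  | |- is_true (Lvalue (enc_pair _ _)) => apply: Lvalue_enc_pair; solve_value
  | |- is_true (Lvalue (enc_list _ _)) => apply: Lvalue_enc_list => ?; solve_value
  | |- is_true (Lvalue (if _ then _ else _)) => case: ifP => _; solve_value
  | |- is_true (Lvalue ?F) => is_const F; by vm_compute
  end.

(** * The decision procedure as an L-program, with exact running time *)

Local Notation L := Llam.
Local Notation V := Lvar.
Local Notation A2 f a b := (Lapp (Lapp f a) b).
Local Notation Ltrue := (enc_bool true).
Local Notation Lfalse := (enc_bool false).

(* Recursion by self-application: a recursive program [P] receives itself as
   its first argument, so a call with arguments [a b] is written [P P a b]. *)
Local Notation call2 P a b := (Lapp (Lapp (Lapp P P) a) b).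
Local Notation call5 P a b c d e :=
  (Lapp (Lapp (Lapp (Lapp (Lapp (Lapp P P) a) b) c) d) e).

Definition Leqn := L(L(L( A2 (V 1) (A2 (V 0) Ltrue (L Lfalse))
  (L (A2 (V 1) Lfalse (L (call2 (V 4) (V 1) (V 0)))))))).
Definition Lmem := L(L(L( A2 (V 0) Lfalse
  (L(L( A2 (call2 Leqn (V 3) (V 1)) Ltrue (call2 (V 4) (V 3) (V 0)) )))))).
Definition Lhas_mem := L(L(L( A2 (V 1) Lfalse
  (L(L( A2 (call2 Lmem (V 1) (V 2)) Ltrue (call2 (V 4) (V 0) (V 2)) )))))).
Definition Lsubn := L(L(L( A2 (V 0) (V 1)
  (L (A2 (V 2) (enc_nat 0) (L (call2 (V 4) (V 0) (V 1)))))))).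
Definition Lsubn_all := L(L(L( A2 (V 0) (V 1)
  (L(L( call2 (V 4) (call2 Lsubn (V 3) (V 1)) (V 0) )))))).
Definition Lcount_down := L(L(L(L(L(L( A2 (V 0) (V 1) (L(L( call5 (V 7) (V 6) (V 5) (V 4)
  (A2 (call2 Lmem (V 6) (V 1)) (A2 (call2 Lhas_mem (V 1) (V 5)) (V 3) (call2 Lsubn_all (V 3) (V 4))) (V 3))
  (V 0) ))) )))))).
Definition Lcheck_cands := L(L(L(L(L(L( A2 (V 0) Ltrue (L (
  A2 (A2 (call5 Lcount_down (V 0) (V 4) (V 3) (V 5) (V 2)) Lfalse (L Ltrue))
     (call5 (V 6) (V 5) (V 4) (V 3) (V 2) (V 0)) Lfalse )))))))).
(* Unpacks the nested pairs of [enc_input] and runs [Lcheck_cands]. *)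
Definition Lswjr := L( Lapp (V 0) (L(L( Lapp (V 0) (L(L( Lapp (V 0) (L(L( Lapp (V 0) (L(L( Lapp (V 0)
  (L(L( call5 Lcheck_cands (V 9) (V 0) (V 3) (V 1) (V 7) )))))))))))))))).

(* Encodings and programs stay folded, so that [ev] recognizes them. *)
Ltac simp_subst :=
  lazymatch goal with |- Lredn ?k ?s ?w =>
    let s' := eval cbn -[enc_nat enc_list enc_bool enc_pair
      Leqn Lmem Lhas_mem Lsubn Lsubn_all Lcount_down Lcheck_cands] in s in
    change (Lredn k s' w) end;
  repeat (rewrite Lsubst_value; last solve_value).

Ltac unfold_head h :=
  lazymatch h with
  | enc_nat _ => eval cbn [enc_nat] in h
  | enc_list _ _ => eval cbn [enc_list] in h
  | enc_bool _ => eval cbn [enc_bool] in h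
  | enc_pair _ _ => eval unfold enc_pair in h
  | _ => eval unfold h in h
  end.

(* Symbolic call-by-value evaluation with step counting: a subterm is first
   matched against the reductions in the context (arguments, induction
   hypothesis and specifications of subprograms); otherwise the evaluator
   descends into applications, performs beta steps on values and unfolds heads. *)
Ltac ev :=
  tryif (eapply Lredn_trans; [match goal with H : _ |- _ => eapply H; ev end | ])
  then ev
  else lazymatch goal with
  | |- Lredn _ (Lapp _ _) _ => ev_app
  | |- Lredn _ _ _ =>
      (* a branching result [if b then enc_nat x else enc_nat y] becomes [enc_nat (if b ...)] *)
      rewrite -?(fun_if enc_nat) -?(fun_if enc_bool); exact: (erefl : Lredn 0 _ _)
  end
with ev_app :=
  lazymatch goal with |- Lredn ?k ?s ?w =>
  lazymatch s with
  | Lapp (Lapp (enc_bool _) _) _ =>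
      eapply Lredn_trans; [eapply Lredn_enc_bool; [ev | ev | solve_value | solve_value] | ev]
  | Lapp (Llam _) _ =>
      first [eapply Lredn_beta; [solve_value | simp_subst]
            | eapply Lredn_trans; [eapply Lredn_appR; ev | ]]; ev
  | Lapp (Lapp (Lapp _ _) _) _ => eapply Lredn_trans; [do 2 eapply Lredn_appL; ev | ev]
  | Lapp (Lapp _ _) _ => eapply Lredn_trans; [eapply Lredn_appL; ev | ev]
  | Lapp ?h ?t => let h' := unfold_head h in progress change (Lredn k (Lapp h' t) w); ev
  end end.

Ltac ev_top := eapply Lredn_eq; [ev | | ].

(* Specifications take their arguments as terms reducing to encodings, so that
   [ev] can chain them. *)
Fixpoint eqn_cost a b := match a, b with
  | 0, 0 => 7 | 0, _.+1 => 8 | _.+1, 0 => 10 | a.+1, b.+1 => 12 + eqn_cost a b end.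

Lemma Leqn_spec a b xa xb ka kb :
  Lredn ka xa (enc_nat a) -> Lredn kb xb (enc_nat b) ->
  Lredn (ka + kb + eqn_cost a b) (call2 Leqn xa xb) (enc_bool (a == b)).
Proof.
elim: a b xa xb ka kb => [|a IH] [|b] xa xb ka kb red_a red_b; ev_top => //; rewrite /=; lia.
Qed.

Fixpoint mem_cost c l := if l is x :: l then 9 + eqn_cost c x + mem_cost c l else 5.

Lemma Lmem_spec c l xc xl kc kl :
  Lredn kc xc (enc_nat c) -> Lredn kl xl (enc_list enc_nat l) ->
  Lredn (kc + kl + mem_cost c l) (call2 Lmem xc xl) (enc_bool (c \in l)).
Proof.
have eqn_spec := Leqn_spec.
elim: l c xc xl kc kl => [|x l IH] c xc xl kc kl red_c red_l; ev_top => //; rewrite /=; lia.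
Qed.

Fixpoint has_cost A W := if A is x :: A then 9 + mem_cost x W + has_cost A W else 5.

Lemma Lhas_mem_spec A W xA xW kA kW :
  Lredn kA xA (enc_list enc_nat A) -> Lredn kW xW (enc_list enc_nat W) ->
  Lredn (kA + kW + has_cost A W) (call2 Lhas_mem xA xW) (enc_bool (has (mem W) A)).
Proof.
have mem_spec := Lmem_spec.
elim: A W xA xW kA kW => [|x A IH] W xA xW kA kW red_A red_W; ev_top => //; rewrite /=; lia.
Qed.

Fixpoint subn_cost r q := match q, r with
  | 0, _ => 5 | _.+1, 0 => 8 | q.+1, r.+1 => 9 + subn_cost r q end.

Lemma Lsubn_spec r q xr xq kr kq :
  Lredn kr xr (enc_nat r) -> Lredn kq xq (enc_nat q) ->
  Lredn (kr + kq + subn_cost r q) (call2 Lsubn xr xq) (enc_nat (r - q)).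
Proof.
elim: q r xr xq kr kq => [|q IH] [|r] xr xq kr kq red_r red_q; ev_top => //; rewrite /=; lia.
Qed.

Fixpoint subn_all_cost r qs :=
  if qs is q :: qs then 7 + subn_cost r q + subn_all_cost (r - q) qs else 5.

Lemma Lsubn_all_spec r qs xr xqs kr kqs :
  Lredn kr xr (enc_nat r) -> Lredn kqs xqs (enc_list enc_nat qs) ->
  Lredn (kr + kqs + subn_all_cost r qs) (call2 Lsubn_all xr xqs) (enc_nat (foldl subn r qs)).
Proof.
have subn_spec := Lsubn_spec.
elim: qs r xr xqs kr kqs => [|q qs IH] r xr xqs kr kqs red_r red_qs; ev_top => //; rewrite /=; lia.
Qed.

Fixpoint count_cost c W qs r B :=
  if B is A :: B then
    14 + mem_cost c A + has_cost A W + subn_all_cost r qs + count_cost c W qs (count_step c W qs r A) B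
  else 8.

Lemma Lcount_down_spec c W qs r B xc xW xqs xr xB kc kW kqs kr kB :
  Lredn kc xc (enc_nat c) -> Lredn kW xW (enc_list enc_nat W) ->
  Lredn kqs xqs (enc_list enc_nat qs) -> Lredn kr xr (enc_nat r) ->
  Lredn kB xB (enc_list (enc_list enc_nat) B) ->
  Lredn (kc + kW + kqs + kr + kB + count_cost c W qs r B)
    (call5 Lcount_down xc xW xqs xr xB) (enc_nat (count_down c W qs r B)).
Proof.
have mem_spec := Lmem_spec; have has_spec := Lhas_mem_spec; have subn_all_spec := Lsubn_all_spec.
elim: B r xc xW xqs xr xB kc kW kqs kr kB => [|A B IH] r xc xW xqs xr xB kc kW kqs kr kB
  red_c red_W red_qs red_r red_B; ev_top => //; rewrite /= /count_step /=; lia.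
Qed.

Definition pos_cost r := if r is 0 then 2 else 3.

Lemma Lpos_spec r : Lredn (pos_cost r) (A2 (enc_nat r) Lfalse (L Ltrue)) (enc_bool (0 < r)).
Proof. by case: r => [|r]; ev_top. Qed.

Fixpoint check_cost n W qs B nc :=
  if nc is c.+1 then
    11 + count_cost c W qs n B + pos_cost (count_down c W qs n B) + check_cost n W qs B c
  else 8.

Lemma Lcheck_cands_spec n W qs B nc xn xW xqs xB xnc kn kW kqs kB knc :
  Lredn kn xn (enc_nat n) -> Lredn kW xW (enc_list enc_nat W) ->
  Lredn kqs xqs (enc_list enc_nat qs) -> Lredn kB xB (enc_list (enc_list enc_nat) B) ->
  Lredn knc xnc (enc_nat nc) ->
  Lredn (kn + kW + kqs + kB + knc + check_cost n W qs B nc)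
    (call5 Lcheck_cands xn xW xqs xB xnc) (enc_bool (check_cands n W qs B nc)).
Proof.
have count_spec := Lcount_down_spec; have pos_spec := Lpos_spec.
elim: nc xn xW xqs xB xnc kn kW kqs kB knc => [|nc IH] xn xW xqs xB xnc kn kW kqs kB knc
  red_n red_W red_qs red_B red_nc; ev_top => //; rewrite /=; lia.
Qed.

Definition swjr_cost I W := 16 + check_cost (n_voters I) W (quotas I) (ballots I) (n_cands I).

Lemma Lswjr_spec I W :
  Lredn (swjr_cost I W) (Lapp Lswjr (enc_input I W)) (enc_bool (swjr_check I W)).
Proof.
have check_spec := Lcheck_cands_spec.
by rewrite /enc_input; ev_top => //; rewrite /swjr_cost /=; lia.
Qed.

(** * Polynomial bound on the running time *)

Lemma eqn_cost_le a b : eqn_cost a b <= 12 * a.+1.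
Proof. elim: a b => [|a IH] [|b] /=; try lia; have := IH b; lia. Qed.

Lemma mem_cost_le c l : mem_cost c l <= 5 + size l * (9 + 12 * c.+1).
Proof. elim: l => [|x l IH] //=; have := eqn_cost_le c x; nia. Qed.

Lemma has_cost_le A W X :
  all (fun x => mem_cost x W <= X) A -> has_cost A W <= 5 + size A * (9 + X).
Proof. by elim: A => [|x A IH] //= /andP[x_le /IH]; nia. Qed.

Lemma subn_cost_le r q : subn_cost r q <= 8 + 9 * q.
Proof. elim: q r => [|q IH] [|r] /=; try lia; have := IH r; lia. Qed.

Lemma subn_all_cost_le r qs X :
  all (fun q => 8 + 9 * q <= X) qs -> subn_all_cost r qs <= 5 + size qs * (7 + X).
Proof.
elim: qs r => [|q qs IH] r //= /andP[q_le /(IH (r - q))].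
by have := subn_cost_le r q; nia.
Qed.

Lemma count_cost_le c W qs r B X Y : (forall r, subn_all_cost r qs <= Y) ->
  all (fun A => mem_cost c A + has_cost A W <= X) B ->
  count_cost c W qs r B <= 8 + size B * (14 + (X + Y)).
Proof.
move=> subn_all_le; elim: B r => [|A B IH] r //= /andP[A_le /(IH (count_step c W qs r A))].
by have := subn_all_le r; nia.
Qed.

Lemma check_cost_le n W qs B nc X : (forall c, c < nc -> count_cost c W qs n B <= X) ->
  check_cost n W qs B nc <= 8 + nc * (14 + X).
Proof.
elim: nc => [|nc IH] //= count_le; have := count_le nc (ltnSn _).
have : pos_cost (count_down nc W qs n B) <= 3 by rewrite /pos_cost; case: count_down.
by have := IH (fun c c_lt => count_le c (ltnW c_lt)); nia.
Qed.

Lemma leq_loop_pow P j a x c0 c1 K : 0 < P -> a <= P -> x <= K * P ^ j ->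
  c0 + a * (c1 + x) <= (c0 + c1 + K) * P ^ j.+1.
Proof.
move=> P_gt0 a_le x_le; have R_gt0 : 0 < P ^ j.+1 by rewrite expn_gt0 P_gt0.
have ax_le : a * x <= K * P ^ j.+1 by rewrite expnS mulnCA leq_mul.
have a_le' : a <= P ^ j.+1 by rewrite (leq_trans a_le) // expnS leq_pmulr // expn_gt0 P_gt0.
move: (P ^ j.+1) R_gt0 ax_le a_le' => R; nia.
Qed.

Section PolynomialCost.

Variables (n nc P : nat) (W qs : seq nat) (B : seq (seq nat)).
Hypotheses (nc_lt : nc < P) (W_lt : size W < P) (qs_lt : size qs < P) (B_lt : size B < P).
Hypotheses (qs_small : all (fun q => q < P) qs)
  (B_small : all (fun A => (size A < P) && all (fun x => x < P) A) B).

Lemma check_cost_poly : check_cost n W qs B nc <= 139 * P ^ 5.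
Proof.
have P_gt0 : 0 < P by apply: leq_ltn_trans nc_lt.
have [P23 P34] : P ^ 2 <= P ^ 3 /\ P ^ 3 <= P ^ 4 by rewrite !leq_pexp2l.
have mem_le c A : c < P -> size A < P -> mem_cost c A <= 26 * P ^ 2.
  move=> c_lt A_lt; apply: leq_trans (mem_cost_le c A) _.
  by apply: leq_loop_pow P_gt0 (ltnW A_lt) _; rewrite expn1 leq_mul2l c_lt.
have has_le A : size A < P -> all (fun x => x < P) A -> has_cost A W <= 40 * P ^ 3.
  move=> A_lt A_small; apply: leq_trans (has_cost_le (X := 26 * P ^ 2) _) _.
    by apply/allP => x /(allP A_small) x_lt; apply: mem_le.
  exact: leq_loop_pow P_gt0 (ltnW A_lt) _.
have subn_all_le r : subn_all_cost r qs <= 29 * P ^ 3.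
  apply: leq_trans (subn_all_cost_le r (X := 17 * P) _) _.
    by apply/allP => q /(allP qs_small) q_lt; lia.
  apply: leq_trans (leq_loop_pow 5 7 P_gt0 (ltnW qs_lt) (_ : 17 * P <= 17 * P ^ 1)) _.
    by rewrite expn1.
  by rewrite leq_mul2l P23 orbT.
have count_le c : c < P -> count_cost c W qs n B <= 117 * P ^ 4.
  move=> c_lt; apply: leq_trans (count_cost_le (X := 66 * P ^ 3) _ subn_all_le _) _.
    apply/allP => A /(allP B_small) /andP[A_lt A_small].
    by have := mem_le c A c_lt A_lt; have := has_le A A_lt A_small; lia.
  by apply: leq_loop_pow P_gt0 (ltnW B_lt) _; lia.
apply: leq_trans (check_cost_le (fun c c_lt => count_le c (ltn_trans c_lt nc_lt))) _.
exact: leq_loop_pow P_gt0 (ltnW nc_lt) (leqnn _).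
Qed.

End PolynomialCost.

Lemma Lsize_enc_nat n : n < Lsize (enc_nat n).
Proof. by elim: n => //= n IH; lia. Qed.

Lemma size_lt_Lsize_enc_list T (f : T -> Lterm) l : size l < Lsize (enc_list f l).
Proof. by elim: l => //= x l IH; lia. Qed.

Lemma Lsize_enc_list_mem (T : eqType) (f : T -> Lterm) l x :
  x \in l -> Lsize (f x) < Lsize (enc_list f l).
Proof.
elim: l => //= y l IH; rewrite inE => /predU1P[-> | /IH]; lia.
Qed.

Lemma Lsize_enc_input I W : let S := Lsize (enc_input I W) in
  [/\ Lsize (enc_nat (n_cands I)) < S, Lsize (enc_list enc_nat W) < S,
      Lsize (enc_list enc_nat (quotas I)) < S
    & Lsize (enc_list (enc_list enc_nat) (ballots I)) < S].
Proof. by rewrite /=; split; lia. Qed.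

Lemma swjr_cost_poly I W : swjr_cost I W <= 155 * (Lsize (enc_input I W)).+1 ^ 5.
Proof.
have [nc_lt W_lt qs_lt B_lt] := Lsize_enc_input I W.
have nat_lt x t : Lsize (enc_nat x) < t -> x < t := ltn_trans (Lsize_enc_nat x).
have list_lt T (f : T -> Lterm) l t : Lsize (enc_list f l) < t -> size l < t :=
  ltn_trans (size_lt_Lsize_enc_list f l).
have := expn_gt0 (Lsize (enc_input I W)).+1 5; rewrite /swjr_cost => pow_gt0.
suff : check_cost (n_voters I) W (quotas I) (ballots I) (n_cands I)
    <= 139 * (Lsize (enc_input I W)).+1 ^ 5 by lia.
apply: check_cost_poly.
- exact: ltnW (nat_lt _ _ nc_lt).
- exact: ltnW (list_lt _ _ _ _ W_lt).
- exact: ltnW (list_lt _ _ _ _ qs_lt).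
- exact: ltnW (list_lt _ _ _ _ B_lt).
- apply/allP => q /(Lsize_enc_list_mem enc_nat) q_lt.
  exact: ltnW (nat_lt _ _ (ltn_trans q_lt qs_lt)).
- apply/allP => A /(Lsize_enc_list_mem (enc_list enc_nat)) /ltn_trans /(_ B_lt) A_lt.
  rewrite ltnS (ltnW (list_lt _ _ _ _ A_lt)) /=.
  apply/allP => x /(Lsize_enc_list_mem enc_nat) x_lt.
  exact: ltnW (nat_lt _ _ (ltn_trans x_lt A_lt)).
Qed.

Theorem mainTheorem7 :
  exists (s : Lterm) (c d : nat),
    Lclosed s /\
    forall (I : scv_instance) (W : seq nat),
      wf_instance I -> is_committee I W ->
      exists (t : nat) (b : bool),
        [/\ t <= c * (Lsize (enc_input I W)).+1 ^ d,
            Lredn t (Lapp s (enc_input I W)) (enc_bool b)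
          & b = true <-> SW_JR I W].
Proof.
exists Lswjr, 155, 5; split; first by vm_compute.
(* The characterization of SW-JR holds for any set W, committee or not. *)
move=> I W wfI _.
exists (swjr_cost I W), (swjr_check I W).
split; [exact: swjr_cost_poly | exact: Lswjr_spec | exact: swjr_check_SW_JR].
Qed.
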